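(* Let $G:\mathbb{R}^n\to\mathbb{R}^m$ be continuously differentiable and define $H:\mathbb{R}^n\to\mathbb{R}^{n+m}$ by $H(v)=\begin{bmatrix} v\\ G(v)\end{bmatrix}$, so that $\nabla H(v)=\begin{bmatrix}I_n\\ \nabla G(v)\end{bmatrix}$. Fix $v_{\mathrm{ref}}\in\mathbb{R}^n$ and let $\nabla G(v_{\mathrm{ref}})=\Psi\Lambda\Phi^\top$ be a reduced singular value decomposition, where $r$ is the rank of $\nabla G(v_{\mathrm{ref}})$, $\Psi\in\mathbb{R}^{m\times r}$ and $\Phi\in\mathbb{R}^{n\times r}$ have orthonormal columns, and $\Lambda\in\mathbb{R}^{r\times r}$ is diagonal with positive diagonal entries. Define $$\widetilde Q=\nabla H(v_{\mathrm{ref}})\big(\nabla H(v_{\mathrm{ref}})^\top\nabla H(v_{\mathrm{ref}})\big)^{-1/2}\in\mathbb{R}^{(n+m)\times n}$$ (the orthonormal factor of the polar decomposition of $\nabla H(v_{\mathrm{ref}})$). Then: (i) For $\xi\in\mathbb{R}^n$, the nonlinear system $\widetilde Q^\top H(v)=\xi$ is equivalent to the system $$(I_n-\Phi\Phi^\top)\xi=(I_n-\Phi\Phi^\top)v,\qquad \Phi\Phi^\top\xi=\Phi\Big[(\Lambda^2+I_r)^{-1/2}\big(\Phi^\top v+\Lambda\Psi^\top G(v)\big)\Big].$$ (ii) The function $$w(v)=\big|\det(\widetilde Q^\top\nabla H(v))\big|^{-1}\exp\Big(-\tfrac12\|H(v)\|^2+\tfrac12\|\widetilde Q^\top H(v)\|^2\Big)$$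 can be written as $$w(v)=\big|\det(\widetilde Q^\top\nabla H(v))\big|^{-1}\exp\Big(-\tfrac12\|G(v)\|^2-\tfrac12\|\Phi^\top v\|^2+\tfrac12\big\|(\Lambda^2+I_r)^{-1/2}\big(\Phi^\top v+\Lambda\Psi^\top G(v)\big)\big\|^2\Big),$$ where $$\big|\det(\widetilde Q^\top\nabla H(v))\big|=\big|\det(\Lambda^2+I_r)^{-1/2}\big|\,\big|\det\big(I_r+\Lambda\Psi^\top\nabla G(v)\Phi\big)\big|.$$
   Context: $\|\cdot\|$ denotes the Euclidean norm; $I_k$ the $k\times k$ identity matrix. The function $w$ is the importance weight (target density over RTO proposal density, up to constants) for the randomize-then-optimize (RTO) proposal built with the orthonormal basis $\widetilde Q$ of the range of $\nabla H(v_{\mathrm{ref}})$, for the target density $\pi(v)\propto\exp(-\frac12\|H(v)\|^2)$. *)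

From HB Require Import structures.
From mathcomp Require Import all_boot all_order all_algebra.
From mathcomp Require Import all_classical all_reals all_analysis.
Set Implicit Arguments. Unset Strict Implicit. Unset Printing Implicit Defensive.
Import Order.TTheory GRing.Theory Num.Theory.
Import numFieldNormedType.Exports.
Local Open Scope ring_scope.
Local Open Scope classical_set_scope.

Section Defs.
Variable R : realType.

(* Jacobian (gradient) of f : R^n -> R^m (column vectors) at v, as an
   m x n matrix: column j is the differential of f at v applied to e_j. *)
Definition gradmx n m (f : 'cV[R]_n -> 'cV[R]_m) (v : 'cV[R]_n) : 'M[R]_(m, n) :=
  \matrix_(i < m, j < n) ('d f v (delta_mx j 0 : 'cV[R]_n)) i 0.

Definition C1 n m (f : 'cV[R]_n -> 'cV[R]_m) : Prop :=
  (forall v, differentiable f v) /\ continuous (gradmx f).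

Definition posdefmx k (A : 'M[R]_k) : Prop :=
  A^T = A /\ forall x : 'cV[R]_k, x != 0 -> 0 < (x^T *m A *m x) 0 0.

(* A^{-1/2}: the unique symmetric positive definite S with S S A = I
   (i.e. S = (A^{1/2})^{-1}); chosen by description, 0 if none exists. *)
Definition invsqrtmx k (A : 'M[R]_k) : 'M[R]_k :=
  xget 0 [set S : 'M[R]_k | posdefmx S /\ S *m S *m A = 1%:M].

Definition sqnorm k (x : 'cV[R]_k) : R := \sum_(i < k) (x i 0) ^+ 2.

Definition Hmap n m (G : 'cV[R]_n -> 'cV[R]_m) (v : 'cV[R]_n) : 'cV[R]_(n + m) :=
  col_mx v (G v).

Definition Qtilde n m (G : 'cV[R]_n -> 'cV[R]_m) (vref : 'cV[R]_n) : 'M[R]_(n + m, n) :=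
  let DH := gradmx (Hmap G) vref in DH *m invsqrtmx (DH^T *m DH).

Definition rto_weight n m (G : 'cV[R]_n -> 'cV[R]_m) (vref v : 'cV[R]_n) : R :=
  let Q := Qtilde G vref in
  `|\det (Q^T *m gradmx (Hmap G) v)|^-1 *
  expR (- (sqnorm (Hmap G v)) / 2 + sqnorm (Q^T *m Hmap G v) / 2).

End Defs.

From HB Require Import structures.
From mathcomp Require Import all_boot all_order all_algebra.
From mathcomp Require Import all_classical all_reals all_analysis.
From mathcomp Require Import lra.
Import Order.TTheory GRing.Theory Num.Theory.
Import numFieldNormedType.Exports.
Set Implicit Arguments. Unset Strict Implicit. Unset Printing Implicit Defensive.
Local Open Scope ring_scope.

(* Write DH = grad H(vref) = [I; Psi Lam Phi^T]; then DH^T DH = I + Phi Lam^2 Phi^T.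
   The map X |-> (I - Phi Phi^T) + Phi X Phi^T embeds r x r matrices into n x n ones
   multiplicatively and preserves positive definiteness, so it carries the inverse
   square root of Lam^2 + I to one of DH^T DH; since positive definite square roots
   are unique, Q~^T = T [I, Phi Lam Psi^T] with T the image of (Lam^2 + I)^(-1/2).
   Hence Q~^T H(v) = (I - Phi Phi^T) v + Phi (Lam^2 + I)^(-1/2) (Phi^T v + Lam Psi^T G(v)):
   (i) is the splitting along range Phi and its orthogonal complement, (ii) is
   Pythagoras, and (iii) follows from det T = det (Lam^2 + I)^(-1/2) and Sylvester's
   identity det (I + A B) = det (I + B A). *)

Section ColMxDifferential.
Variable R : realType.

Definition col_mx0 p q k (x : 'M[R]_(p, k)) : 'M[R]_(p + q, k) := col_mx x 0.
Definition col_0mx p q k (y : 'M[R]_(q, k)) : 'M[R]_(p + q, k) := col_mx 0 y.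

Lemma col_mx0_is_linear p q k : linear (@col_mx0 p q k).
Proof. by move=> a x y; rewrite /col_mx0 scale_col_mx add_col_mx scaler0 addr0. Qed.
Lemma col_0mx_is_linear p q k : linear (@col_0mx p q k).
Proof. by move=> a x y; rewrite /col_0mx scale_col_mx add_col_mx scaler0 addr0. Qed.
HB.instance Definition _ p q k :=
  GRing.isLinear.Build _ _ _ _ (@col_mx0 p q k) (@col_mx0_is_linear p q k).
HB.instance Definition _ p q k :=
  GRing.isLinear.Build _ _ _ _ (@col_0mx p q k) (@col_0mx_is_linear p q k).

Lemma continuous_col_mx0 p q k : continuous (@col_mx0 p q k).
Proof.
move=> x A /= /nbhs_ballP[e e0 eA]; apply/nbhs_ballP; exists e => // y [_ xy].
apply: eA; split => // i j; rewrite !mxE.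
by case: splitP => l _; [exact: xy | rewrite mxE; exact: ballxx].
Qed.

Lemma continuous_col_0mx p q k : continuous (@col_0mx p q k).
Proof.
move=> y A /= /nbhs_ballP[e e0 eA]; apply/nbhs_ballP; exists e => // z [_ yz].
apply: eA; split => // i j; rewrite !mxE.
by case: splitP => l _; [rewrite mxE; exact: ballxx | exact: yz].
Qed.

Lemma diff_col_mx {V : normedModType R} {p q k}
    {f : V -> 'M[R]_(p, k)} {g : V -> 'M[R]_(q, k)} {v} :
  differentiable f v -> differentiable g v ->
  'd (fun x => col_mx (f x) (g x)) v = (fun e => col_mx ('d f v e) ('d g v e)) :> (V -> _).
Proof.
move=> df dg.
have colE x y : col_mx x y = @col_mx0 p q k x + @col_0mx p q k y.
  by rewrite /col_mx0 /col_0mx add_col_mx addr0 add0r.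
have dU := linear_differentiable (f v) (@continuous_col_mx0 p q k).
have dD := linear_differentiable (g v) (@continuous_col_0mx p q k).
have -> : (fun x => col_mx (f x) (g x)) = (@col_mx0 p q k \o f) + (@col_0mx p q k \o g).
  by apply/funext => x; rewrite colE.
rewrite (diffD (differentiable_comp df dU) (differentiable_comp dg dD)).
apply/funext => e.
have hU := congr1 (fun F => F e) (diff_comp df dU).
have hD := congr1 (fun F => F e) (diff_comp dg dD).
rewrite /= (diff_lin _ (@continuous_col_mx0 p q k)) in hU.
rewrite /= (diff_lin _ (@continuous_col_0mx p q k)) in hD.
by rewrite colE; congr (_ + _); [exact: hU | exact: hD].
Qed.

Lemma gradmx_Hmap n m (G : 'cV[R]_n -> 'cV[R]_m) v : differentiable G v ->
  gradmx (Hmap G) v = col_mx 1%:M (gradmx G v).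
Proof.
move=> dG; have did : differentiable (@id 'cV[R]_n) v by exact: ex_diff.
apply/matrixP => i j; rewrite !mxE /Hmap (diff_col_mx did dG) diff_val mxE.
by case: splitP => k _; rewrite !mxE ?eqxx ?andbT.
Qed.

End ColMxDifferential.

Lemma det_1addmx_mulC (R : comPzRingType) n r (A : 'M[R]_(n, r)) (B : 'M[R]_(r, n)) :
  \det (1%:M + A *m B) = \det (1%:M + B *m A).
Proof.
pose M := block_mx (1%:M : 'M[R]_n) (- A) B (1%:M : 'M[R]_r).
have eL : block_mx 1%:M A 0 1%:M *m M = block_mx (1%:M + A *m B) 0 B 1%:M.
  by rewrite mulmx_block !mul1mx !mul0mx !mulmx1 ?add0r ?addr0 addNr.
have eR : block_mx 1%:M 0 (- B) 1%:M *m M = block_mx 1%:M (- A) 0 (1%:M + B *m A).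
  rewrite mulmx_block !mul1mx !mul0mx !mulmx1 ?add0r ?addr0 addNr.
  by rewrite mulNmx mulmxN opprK addrC.
have := congr1 determinant eL; have := congr1 determinant eR.
by rewrite !det_mulmx !det_ublock !det_lblock !det1 !mul1r !mulr1 => -> ->.
Qed.

Section RangeExtension.
Variables (R : comPzRingType) (n r : nat) (Phi : 'M[R]_(n, r)).

Definition compl_proj : 'M[R]_n := 1%:M - Phi *m Phi^T.

Lemma compl_proj_add : compl_proj + Phi *m Phi^T = 1%:M.
Proof. exact: subrK. Qed.

Lemma tr_compl_proj : compl_proj^T = compl_proj.
Proof. by rewrite /compl_proj linearB /= trmx1 trmx_mul trmxK. Qed.

Hypothesis Phi_orth : Phi^T *m Phi = 1%:M.

Lemma compl_proj_mulmx_Phi : compl_proj *m Phi = 0.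
Proof. by rewrite /compl_proj mulmxBl mul1mx -mulmxA Phi_orth mulmx1 subrr. Qed.

Lemma trPhi_mulmx_compl_proj : Phi^T *m compl_proj = 0.
Proof. by rewrite /compl_proj mulmxBr mulmx1 mulmxA Phi_orth mul1mx subrr. Qed.

Lemma compl_proj_idem : compl_proj *m compl_proj = compl_proj.
Proof.
rewrite {1}/compl_proj mulmxBl mul1mx -mulmxA trPhi_mulmx_compl_proj.
by rewrite mulmx0 subr0.
Qed.

Lemma compl_proj_decompP (u x : 'cV[R]_n) (z : 'cV[R]_r) :
  compl_proj *m u + Phi *m z = x <->
  compl_proj *m x = compl_proj *m u /\ Phi *m Phi^T *m x = Phi *m z.
Proof.
split=> [<- | [hPc hP]]; first split.
- by rewrite mulmxDr !mulmxA compl_proj_idem compl_proj_mulmx_Phi mul0mx addr0.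
- rewrite mulmxDr !mulmxA -[Phi *m _ *m compl_proj]mulmxA trPhi_mulmx_compl_proj.
  by rewrite mulmx0 mul0mx add0r -[Phi *m Phi^T *m Phi]mulmxA Phi_orth mulmx1.
by rewrite -hPc -hP -mulmxDl compl_proj_add mul1mx.
Qed.

Definition range_ext (X : 'M[R]_r) : 'M[R]_n := compl_proj + Phi *m X *m Phi^T.

Lemma range_ext_mul X Y : range_ext X *m range_ext Y = range_ext (X *m Y).
Proof.
rewrite /range_ext mulmxDl (mulmxDr compl_proj) (mulmxDr (Phi *m X *m Phi^T)).
rewrite compl_proj_idem !mulmxA compl_proj_mulmx_Phi.
rewrite -[_ *m Phi^T *m compl_proj]mulmxA trPhi_mulmx_compl_proj.
by rewrite -[_ *m Phi^T *m Phi]mulmxA Phi_orth !mul0mx mulmx0 mulmx1 addr0 add0r.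
Qed.

Lemma range_ext_add1 L : 1%:M + Phi *m L *m Phi^T = range_ext (L + 1%:M).
Proof. by rewrite /range_ext mulmxDr mulmxDl mulmx1 addrA addrAC compl_proj_add. Qed.

Lemma range_ext1 : range_ext 1%:M = 1%:M.
Proof. by rewrite /range_ext mulmx1 compl_proj_add. Qed.

Lemma tr_range_ext X : (range_ext X)^T = range_ext X^T.
Proof. by rewrite /range_ext linearD /= tr_compl_proj !trmx_mul trmxK mulmxA. Qed.

Lemma det_range_ext X : \det (range_ext X) = \det X.
Proof.
have -> : range_ext X = 1%:M + Phi *m ((X - 1%:M) *m Phi^T).
  by rewrite /range_ext /compl_proj mulmxBl mul1mx mulmxBr mulmxA addrA addrAC.
by rewrite det_1addmx_mulC -mulmxA Phi_orth mulmx1 addrC subrK.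
Qed.

Lemma range_ext_mulmx_add X (u : 'cV[R]_n) (y : 'cV[R]_r) :
  range_ext X *m (u + Phi *m y) = compl_proj *m u + Phi *m (X *m (Phi^T *m u + y)).
Proof.
rewrite /range_ext mulmxDl !mulmxDr !mulmxA compl_proj_mulmx_Phi mul0mx addr0.
by rewrite -[_ *m Phi^T *m Phi]mulmxA Phi_orth mulmx1 addrA.
Qed.

End RangeExtension.

Section PositiveDefinite.
Variable R : realType.

Lemma sqnormE k (x : 'cV[R]_k) : sqnorm x = (x^T *m x) 0 0.
Proof. by rewrite /sqnorm mxE; apply: eq_bigr => i _; rewrite mxE expr2. Qed.

Lemma wsum_sqr_gt0 k (w : 'I_k -> R) (x : 'cV[R]_k) :
  (forall i, 0 < w i) -> x != 0 -> 0 < \sum_i w i * x i 0 ^+ 2.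
Proof.
move=> w_gt0 x_neq0; have [i xi_neq0] : exists i, x i 0 != 0.
  apply/existsP; apply: contraNT x_neq0 => /existsPn x0.
  by apply/eqP/matrixP => i j; rewrite (ord1 j) mxE; apply/eqP/negbNE.
rewrite (bigD1 i) //=; apply: ltr_pwDl.
  by rewrite mulr_gt0 // lt_def sqrf_eq0 xi_neq0 sqr_ge0.
by apply: sumr_ge0 => j _; exact: mulr_ge0 (ltW (w_gt0 j)) (sqr_ge0 _).
Qed.

Lemma sqnorm_ge0 k (x : 'cV[R]_k) : 0 <= sqnorm x.
Proof. by apply: sumr_ge0 => i _; exact: sqr_ge0. Qed.

Lemma sqnorm_gt0 k (x : 'cV[R]_k) : x != 0 -> 0 < sqnorm x.
Proof.
move=> x_neq0; rewrite /sqnorm.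
under eq_bigr do rewrite -[_ ^+ 2]mul1r.
exact: wsum_sqr_gt0.
Qed.

Lemma sqnorm_col_mx p q (x : 'cV[R]_p) (y : 'cV[R]_q) :
  sqnorm (col_mx x y) = sqnorm x + sqnorm y.
Proof. by rewrite !sqnormE tr_col_mx mul_row_col mxE. Qed.

Lemma posdefmx_diag k (w : 'rV[R]_k) : (forall i, 0 < w 0 i) -> posdefmx (diag_mx w).
Proof.
move=> w_gt0; split=> [|x x_neq0]; first exact: tr_diag_mx.
rewrite -mulmxA mul_diag_mx mxE (eq_bigr (fun i => w 0 i * x i 0 ^+ 2)).
  exact: wsum_sqr_gt0.
by move=> i _; rewrite !mxE mulrCA -expr2.
Qed.

Lemma posdefmx_quad_ge0 {k} {A : 'M[R]_k} (x : 'cV[R]_k) :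
  posdefmx A -> 0 <= (x^T *m A *m x) 0 0.
Proof.
move=> [_ A_pos]; have [->|x_neq0] := eqVneq x 0; last exact/ltW/A_pos.
by rewrite mulmx0 mxE.
Qed.

Lemma mxtrace_quad k (A X : 'M[R]_k) :
  \tr (X^T *m A *m X) = \sum_j ((col j X)^T *m A *m col j X) 0 0.
Proof.
apply: eq_bigr => j _; rewrite !mxE; apply: eq_bigr => a _; rewrite !mxE.
by congr (_ * _); apply: eq_bigr => b _; rewrite !mxE.
Qed.

Lemma posdefmx_tr_quad_ge0 {k} {A : 'M[R]_k} (X : 'M[R]_k) :
  posdefmx A -> 0 <= \tr (X^T *m A *m X).
Proof.
by move=> A_pd; rewrite mxtrace_quad; apply: sumr_ge0 => j _; exact: posdefmx_quad_ge0.
Qed.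

Lemma posdefmx_tr_quad_eq0 {k} {A X : 'M[R]_k} :
  posdefmx A -> \tr (X^T *m A *m X) = 0 -> X = 0.
Proof.
move=> A_pd; rewrite mxtrace_quad => /psumr_eq0P quad_eq0.
have {}quad_eq0 j : ((col j X)^T *m A *m col j X) 0 0 = 0.
  by apply: quad_eq0 => // l _; exact: posdefmx_quad_ge0.
apply/matrixP => i j; have : col j X = 0.
  by apply/eqP; apply: contraT => /A_pd.2; rewrite quad_eq0 ltxx.
by move/matrixP/(_ i 0); rewrite !mxE.
Qed.

Definition is_invsqrtmx {k} (A S : 'M[R]_k) := posdefmx S /\ S *m S *m A = 1%:M.

Lemma is_invsqrtmx_uniq {k} {A S1 S2 : 'M[R]_k} :
  is_invsqrtmx A S1 -> is_invsqrtmx A S2 -> S1 = S2.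
Proof.
move=> [S1_pd S1A] [S2_pd S2A].
have sqr_eq : S1 *m S1 = S2 *m S2.
  by rewrite -[S1 *m S1]mulmx1 -(mulmx1C S2A) mulmxA S1A mul1mx.
pose D := S1 - S2.
have DT : D^T = D by rewrite /D linearB /= S1_pd.1 S2_pd.1.
(* S1 D + D S2 = S1^2 - S2^2 = 0, so the two nonnegative traces below add up to 0. *)
have tr_sum : \tr (D^T *m S1 *m D) + \tr (D^T *m S2 *m D) = 0.
  have DS_eq0 : S1 *m D + D *m S2 = 0.
    by rewrite /D mulmxBr mulmxBl sqr_eq addrA subrK subrr.
  rewrite DT [\tr (D *m S2 *m D)]mxtrace_mulC -raddfD /= -mulmxA -mulmxDr DS_eq0.
  by rewrite mulmx0 mxtrace0.
have tr1 := posdefmx_tr_quad_ge0 D S1_pd; have tr2 := posdefmx_tr_quad_ge0 D S2_pd.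
have /(posdefmx_tr_quad_eq0 S1_pd)/eqP : \tr (D^T *m S1 *m D) = 0 by lra.
by rewrite subr_eq0 => /eqP.
Qed.

Lemma invsqrtmx_eq {k} {A S : 'M[R]_k} : is_invsqrtmx A S -> invsqrtmx A = S.
Proof.
move=> S_inv; apply: (is_invsqrtmx_uniq _ S_inv).
exact: (xgetPex 0 (ex_intro _ S S_inv)).
Qed.

Lemma invsqrtmx_spec {k} {A : 'M[R]_k} S : is_invsqrtmx A S -> is_invsqrtmx A (invsqrtmx A).
Proof. by move=> S_inv; rewrite (invsqrtmx_eq S_inv). Qed.

Lemma is_invsqrtmx_diag_sqr_add1 r (lam : 'rV[R]_r) :
  is_invsqrtmx (diag_mx lam *m diag_mx lam + 1%:M)
    (diag_mx (\row_i (Num.sqrt (lam 0 i ^+ 2 + 1))^-1)).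
Proof.
have sqr_add1_gt0 i : 0 < lam 0 i ^+ 2 + 1 by rewrite ltr_pwDr ?sqr_ge0.
split.
  by apply: posdefmx_diag => i; rewrite mxE invr_gt0 sqrtr_gt0.
apply/matrixP => i j.
rewrite [diag_mx lam *m _]mulmx_diag mulmx_diag mul_diag_mx !mxE.
have [->|ij] := eqVneq i j; last by rewrite !mulr0n addr0 mulr0.
by rewrite !mulr1n -invfM -!expr2 sqr_sqrtr ?ltW // mulVf // gt_eqF.
Qed.

Section RangeExtensionPosDef.
Variables (n r : nat) (Phi : 'M[R]_(n, r)).
Hypothesis Phi_orth : Phi^T *m Phi = 1%:M.

Local Notation Pc := (compl_proj Phi).

Lemma sqnorm_compl_proj_add (u : 'cV[R]_n) (z : 'cV[R]_r) :
  sqnorm (Pc *m u + Phi *m z) = sqnorm u - sqnorm (Phi^T *m u) + sqnorm z.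
Proof.
have xT : (Pc *m u + Phi *m z)^T = u^T *m Pc + z^T *m Phi^T.
  by rewrite [LHS]linearD /= !trmx_mul tr_compl_proj.
rewrite !sqnormE xT mulmxDl (mulmxDr (u^T *m Pc)) (mulmxDr (z^T *m Phi^T)) !mulmxA.
rewrite -[u^T *m Pc *m Pc]mulmxA compl_proj_idem //.
rewrite -[u^T *m Pc *m Phi]mulmxA compl_proj_mulmx_Phi //.
rewrite -[z^T *m Phi^T *m Pc]mulmxA trPhi_mulmx_compl_proj //.
rewrite -[z^T *m Phi^T *m Phi]mulmxA Phi_orth mulmx1 !mulmx0 !mul0mx addr0 add0r.
by rewrite trmx_mul trmxK /compl_proj mulmxBr mulmx1 mulmxBl !mulmxA !mxE.
Qed.

Lemma posdefmx_range_ext X : posdefmx X -> posdefmx (range_ext Phi X).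
Proof.
move=> [XT X_pos]; split; first by rewrite tr_range_ext XT.
move=> x x_neq0.
have -> : x^T *m range_ext Phi X *m x =
    (Pc *m x)^T *m (Pc *m x) + (Phi^T *m x)^T *m X *m (Phi^T *m x).
  rewrite /range_ext mulmxDr mulmxDl !trmx_mul trmxK tr_compl_proj !mulmxA.
  by rewrite -[x^T *m Pc *m Pc]mulmxA compl_proj_idem.
have [Phix_eq0|Phix_neq0] := eqVneq (Phi^T *m x) 0.
  have -> : Pc *m x = x by rewrite /compl_proj mulmxBl mul1mx -mulmxA Phix_eq0 mulmx0 subr0.
  by rewrite Phix_eq0 mulmx0 addr0 -sqnormE sqnorm_gt0.
by rewrite mxE -sqnormE; exact: ltr_wpDl (sqnorm_ge0 _) (X_pos _ Phix_neq0).
Qed.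

Lemma is_invsqrtmx_range_ext L S :
  is_invsqrtmx (L + 1%:M) S ->
  is_invsqrtmx (1%:M + Phi *m L *m Phi^T) (range_ext Phi S).
Proof.
move=> [S_pd SSL]; split; first exact: posdefmx_range_ext.
by rewrite range_ext_add1 !range_ext_mul // SSL range_ext1.
Qed.

End RangeExtensionPosDef.

End PositiveDefinite.

Section RandomizeThenOptimize.
Variables (R : realType) (n m r : nat) (G : 'cV[R]_n -> 'cV[R]_m) (vref : 'cV[R]_n).
Variables (Psi : 'M[R]_(m, r)) (Phi : 'M[R]_(n, r)) (lam : 'rV[R]_r).
Hypothesis G_diff : forall v, differentiable G v.
Hypothesis Psi_orth : Psi^T *m Psi = 1%:M.
Hypothesis Phi_orth : Phi^T *m Phi = 1%:M.
Hypothesis gradG_svd : gradmx G vref = Psi *m diag_mx lam *m Phi^T.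

Local Notation Lam := (diag_mx lam).
Local Notation S := (invsqrtmx (Lam *m Lam + 1%:M)).

Lemma trmx_gradH_mul_gradH :
  (gradmx (Hmap G) vref)^T *m gradmx (Hmap G) vref = 1%:M + Phi *m (Lam *m Lam) *m Phi^T.
Proof.
rewrite gradmx_Hmap // tr_col_mx mul_row_col trmx1 mul1mx gradG_svd.
rewrite !trmx_mul tr_diag_mx trmxK !mulmxA -[_ *m Psi^T *m Psi]mulmxA Psi_orth mulmx1.
by rewrite -[Phi *m Lam *m Lam]mulmxA.
Qed.

Lemma trQtilde :
  (Qtilde G vref)^T = range_ext Phi S *m row_mx 1%:M (Phi *m Lam *m Psi^T).
Proof.
have S_inv := invsqrtmx_spec (is_invsqrtmx_diag_sqr_add1 lam).
have T_inv := is_invsqrtmx_range_ext Phi_orth S_inv.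
rewrite /Qtilde /= trmx_gradH_mul_gradH (invsqrtmx_eq T_inv) trmx_mul T_inv.1.1.
by rewrite gradmx_Hmap // tr_col_mx trmx1 gradG_svd !trmx_mul trmxK tr_diag_mx mulmxA.
Qed.

Lemma trQtilde_mul_Hmap v :
  (Qtilde G vref)^T *m Hmap G v =
  compl_proj Phi *m v + Phi *m (S *m (Phi^T *m v + Lam *m (Psi^T *m G v))).
Proof.
by rewrite trQtilde /Hmap -[LHS]mulmxA mul_row_col mul1mx -!mulmxA range_ext_mulmx_add.
Qed.

Lemma det_trQtilde_mul_gradH v :
  \det ((Qtilde G vref)^T *m gradmx (Hmap G) v) =
  \det S * \det (1%:M + Lam *m Psi^T *m gradmx G v *m Phi).
Proof.
rewrite trQtilde gradmx_Hmap // -[range_ext _ _ *m _ *m _]mulmxA mul_row_col mul1mx.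
by rewrite det_mulmx det_range_ext // -!mulmxA det_1addmx_mulC !mulmxA.
Qed.

End RandomizeThenOptimize.

Theorem proposition3p1 (R : realType) (n m : nat)
  (G : 'cV[R]_n -> 'cV[R]_m) (vref : 'cV[R]_n) (r : nat)
  (Psi : 'M[R]_(m, r)) (Phi : 'M[R]_(n, r)) (lam : 'rV[R]_r) :
  C1 G ->
  r = \rank (gradmx G vref) ->
  Psi^T *m Psi = 1%:M ->
  Phi^T *m Phi = 1%:M ->
  (forall i, 0 < lam 0 i) ->
  gradmx G vref = Psi *m diag_mx lam *m Phi^T ->
  let Lam := diag_mx lam in
  let Q := Qtilde G vref in
  let S := invsqrtmx (Lam *m Lam + 1%:M) in
  let P := Phi *m Phi^T in
  (forall (xi v : 'cV[R]_n),
      Q^T *m Hmap G v = xi <->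
      ((1%:M - P) *m xi = (1%:M - P) *m v /\
       P *m xi = Phi *m (S *m (Phi^T *m v + Lam *m (Psi^T *m G v))))) /\
  (forall v : 'cV[R]_n,
      rto_weight G vref v =
        `|\det (Q^T *m gradmx (Hmap G) v)|^-1 *
        expR (- (sqnorm (G v)) / 2 - sqnorm (Phi^T *m v) / 2
              + sqnorm (S *m (Phi^T *m v + Lam *m (Psi^T *m G v))) / 2)) /\
  (forall v : 'cV[R]_n,
      `|\det (Q^T *m gradmx (Hmap G) v)| =
        `|\det S| * `|\det (1%:M + Lam *m Psi^T *m gradmx G v *m Phi)|).
Proof.
move=> [G_diff _] _ Psi_orth Phi_orth _ gradG_svd Lam Q S P.
have QH := trQtilde_mul_Hmap G_diff Psi_orth Phi_orth gradG_svd.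
split; [|split] => [xi v | v | v].
- by rewrite QH; exact: compl_proj_decompP.
- rewrite /rto_weight /= QH sqnorm_compl_proj_add // /Hmap sqnorm_col_mx.
  by congr (_ * expR _); rewrite /S /Lam; lra.
- by rewrite (det_trQtilde_mul_gradH G_diff Psi_orth Phi_orth gradG_svd) normrM.
Qed.
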